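(* Let $p_1,p_2,\dots$ be a sequence with $0\le p_j\le 1$ for all $j$, and let $I_1,I_2,\dots$ be independent Bernoulli random variables with $P(I_k=1)=p_k$. Put $q_k=1-p_k$, $r_k=p_k/q_k$ (with $r_k=\infty$ if $p_k=1$), and for $1\le k\le n$ let $R(1,n)=\sum_{j=1}^n r_j$. For each $n\ge1$ let $V(n)$ be the maximal probability, over all stopping times $\tau$ with respect to $\mathcal F_k=\sigma(I_1,\dots,I_k)$ taking values in $\{1,\dots,n\}$, that $I_\tau=1$ and $I_j=0$ for all $\tau<j\le n$. Let $$N^*=\sup\{n\in\mathbb N: R(1,n)\le 1\}\in\mathbb N\cup\{\infty\}.$$ Then $V(n)$ is non-decreasing in $n$ for $1\le n\le N^*$, i.e. $V(n)\le V(n+1)$ for every positive integer $n$ with $n+1\le N^*$.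
   Context: $V(n)$ is the optimal probability of stopping online (without recall) on the last index $k\le n$ with $I_k=1$ (the ''$n$-problem''). *)

From HB Require Import structures.
From mathcomp Require Import all_boot all_order all_algebra.
Set Implicit Arguments. Unset Strict Implicit. Unset Printing Implicit Defensive.
Import Order.TTheory GRing.Theory Num.Theory.
Local Open Scope ring_scope.

(* Sequence p : nat -> R, indexed from 1 (p 0 is irrelevant).
   An outcome of (I_1,...,I_n) is w : {ffun 'I_n -> bool}, where w j = I_{j+1}. *)
Definition outcome (n : nat) := {ffun 'I_n -> bool}.

Definition weight {R : realFieldType} (p : nat -> R) (n : nat) (w : outcome n) : R :=
  \prod_(j < n) (if w j then p j.+1 else 1 - p j.+1).

(* A rule tau : outcome -> 'I_n (value j means stopping at time j+1) is a stopping
   time w.r.t. F_k = sigma(I_1..I_k): whether tau = j is determined by I_1..I_{j+1}. *)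
Definition is_stopping (n : nat) (tau : {ffun outcome n -> 'I_n}) : bool :=
  [forall w : outcome n, forall w' : outcome n,
     [forall j : 'I_n, (j <= tau w)%N ==> (w j == w' j)] ==> (tau w' == tau w)].

Definition success (n : nat) (tau : {ffun outcome n -> 'I_n}) (w : outcome n) : bool :=
  w (tau w) && [forall j : 'I_n, (tau w < j)%N ==> ~~ w j].

Definition win_prob {R : realFieldType} (p : nat -> R) (n : nat)
    (tau : {ffun outcome n -> 'I_n}) : R :=
  \sum_(w : outcome n | success tau w) weight p w.

Definition V {R : realFieldType} (p : nat -> R) (n : nat) : R :=
  \big[Num.max/0]_(tau : {ffun outcome n -> 'I_n} | is_stopping tau) win_prob p tau.

(* "R(1,n) <= 1", where r_j = p_j/(1-p_j) and r_j = +oo when p_j = 1. *)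
Definition R1_le1 {R : realFieldType} (p : nat -> R) (n : nat) : Prop :=
  (forall j, (1 <= j <= n)%N -> p j < 1) /\
  \sum_(1 <= j < n.+1) p j / (1 - p j) <= 1.

(* Fix a stopping rule tau with horizon n, write s_j = P(tau >= j), and let
   T_j and W_j be the probabilities that none, resp. exactly one, of
   I_(j+1), ..., I_n equals 1.  The event {tau >= j} depends on I_1, ..., I_j
   only, and W_i = p_(i+1) T_(i+1) + q_(i+1) W_(i+1); hence, as soon as
   W_(i+1) <= T_(i+1), the probability of winning by stopping at time i+1 is at
   most s_i W_i - s_(i+1) W_(i+1).  Telescoping gives V(n) <= W_0.  The
   condition W_j <= T_j holds because W_j = T_j R(j+1, n) and R(j+1, n) <= 1.
   Conversely, stopping at the first success wins exactly when there is a
   single success, so V(n+1) >= q_(n+1) W_0 + p_(n+1) T_0 >= W_0. *)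

From mathcomp Require Import all_boot all_order all_algebra.
From mathcomp Require Import ring.
Import Order.TTheory GRing.Theory Num.Theory.
Local Open Scope ring_scope.

Definition Pr {R : realFieldType} (p : nat -> R) {n} (A : pred (outcome n)) : R :=
  \sum_(w | A w) weight p w.

Section Probability.

Context {R : realFieldType} (p : nat -> R) {n : nat}.
Hypothesis p_prob : forall j, 0 <= p j <= 1.

Lemma eq_Pr (A B : pred (outcome n)) : A =1 B -> Pr p A = Pr p B.
Proof. by move=> eqAB; apply: eq_bigl. Qed.

Lemma weight_ge0 (w : outcome n) : 0 <= weight p w.
Proof.
apply: prodr_ge0 => j _.
by have /andP[p_ge0 p_le1] := p_prob j.+1; case: (w j); rewrite ?subr_ge0.
Qed.

Lemma le_Pr (A B : pred (outcome n)) : subpred A B -> Pr p A <= Pr p B.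
Proof.
move=> sAB; rewrite [leRHS](bigID A) /=.
rewrite (eq_bigl A) => [|w]; last by apply/andP/idP => [[]|Aw] //; rewrite sAB.
by rewrite lerDl sumr_ge0 // => w _; apply: weight_ge0.
Qed.

Lemma Pr_split (A B : pred (outcome n)) :
  Pr p A = Pr p (fun w => A w && B w) + Pr p (fun w => A w && ~~ B w).
Proof. exact: bigID. Qed.

Lemma Pr_prod (P : 'I_n -> pred bool) :
  Pr p (fun w => [forall k, P k (w k)]) =
  \prod_(k < n) \sum_(b | P k b) (if b then p k.+1 else 1 - p k.+1).
Proof.
under eq_bigr => k _ do rewrite big_mkcond /=.
rewrite bigA_distr_bigA /Pr big_mkcond /=; apply: eq_bigr => w _.
case: forallP => [Pw | /forallP/forallPn[k /negbTE nPk]].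
  by apply: eq_bigr => k _; rewrite Pw.
by rewrite (bigD1 k) //= nPk mul0r.
Qed.

Lemma Pr_predT : Pr p (xpredT : pred (outcome n)) = 1.
Proof.
have -> : Pr p (xpredT : pred (outcome n)) =
          Pr p (fun w : outcome n => [forall k : 'I_n, true]).
  by apply: eq_Pr => w; apply/esym/forallP.
by rewrite (Pr_prod (fun _ _ => true)) big1 // => k _; rewrite big_bool /= subrKC.
Qed.

Lemma Pr_coord (i : 'I_n) : Pr p (fun w => w i) = p i.+1.
Proof.
have -> : Pr p (fun w : outcome n => w i) =
          Pr p (fun w => [forall k, (k == i) ==> w k]).
  apply: eq_Pr => w; apply/idP/forallP => [wi k | /(_ i)].
    by apply/implyP => /eqP ->.
  by rewrite eqxx.
rewrite (Pr_prod (fun k b => (k == i) ==> b)) (bigD1 i) //= [X in _ * X]big1; last first.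
  by move=> k /negbTE ->; rewrite big_bool /= subrKC.
by rewrite eqxx big_mkcond big_bool /= addr0 mulr1.
Qed.

(* Exchanging the coordinates outside S between two outcomes is a
   weight-preserving involution on pairs of outcomes that turns the condition
   [A w && B w'] into [A w && B w]. *)
Lemma Pr_indep (S : pred 'I_n) (A B : pred (outcome n)) :
    (forall w w' : outcome n, (forall k, S k -> w k = w' k) -> A w = A w') ->
    (forall w w' : outcome n, (forall k, ~~ S k -> w k = w' k) -> B w = B w') ->
  Pr p (fun w => A w && B w) = Pr p A * Pr p B.
Proof.
move=> A_S B_notS; rewrite -[LHS]mulr1 -[X in _ * X]Pr_predT /Pr big_distrlr /=.
rewrite big_distrlr /= !pair_big /=.
pose mix (w w' : outcome n) : outcome n := [ffun k => if S k then w k else w' k].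
pose swap (u : outcome n * outcome n) := (mix u.1 u.2, mix u.2 u.1).
have swapK : involutive swap.
  by case=> w w'; congr pair; apply/ffunP => k; rewrite !ffunE; case: (S k).
rewrite [RHS](reindex_inj (inv_inj swapK)) /=; apply: eq_big => [[w w']|[w w'] _] /=.
  rewrite andbT; congr andb; [apply: A_S | apply: B_notS] => k Sk;
  by rewrite ffunE ?Sk ?(negbTE Sk).
rewrite /weight -!big_split /=; apply: eq_bigr => k _.
by rewrite !ffunE; case: (S k); rewrite // mulrC.
Qed.

End Probability.

Section TailEvents.

Context {R : realFieldType} (p : nat -> R).
Hypothesis p_prob : forall j, 0 <= p j <= 1.

Definition prob_none i n : R := \prod_(i <= k < n) (1 - p k.+1).

Definition prob_one i n : R :=
  \sum_(i <= j < n) \prod_(i <= k < n) (if k == j then p k.+1 else 1 - p k.+1).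

Lemma prob_none_ge0 i n : 0 <= prob_none i n.
Proof. by apply: prodr_ge0 => k _; have /andP[_] := p_prob k.+1; rewrite subr_ge0. Qed.

Lemma prob_one_ge0 i n : 0 <= prob_one i n.
Proof.
apply: sumr_ge0 => j _; apply: prodr_ge0 => k _.
by have /andP[p_ge0 p_le1] := p_prob k.+1; case: eqP; rewrite ?subr_ge0.
Qed.

Lemma prob_one_recl i n : (i < n)%N ->
  prob_one i n = p i.+1 * prob_none i.+1 n + (1 - p i.+1) * prob_one i.+1 n.
Proof.
move=> lt_in; rewrite /prob_one big_ltn // big_ltn // eqxx; congr (_ * _ + _).
  by apply: eq_big_nat => k /andP[lt_ik _]; rewrite gtn_eqF.
rewrite mulr_sumr; apply: eq_big_nat => j /andP[lt_ij _].
by rewrite big_ltn // ltn_eqF.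
Qed.

Lemma prob_none_recr i n : (i <= n)%N ->
  prob_none i n.+1 = prob_none i n * (1 - p n.+1).
Proof. exact: big_nat_recr. Qed.

Lemma prob_one_recr i n : (i <= n)%N ->
  prob_one i n.+1 = prob_one i n * (1 - p n.+1) + prob_none i n * p n.+1.
Proof.
move=> le_in; rewrite /prob_one big_nat_recr // big_nat_recr //= eqxx.
congr (_ + _ * _); last first.
  by apply: eq_big_nat => k /andP[_ lt_kn]; rewrite ltn_eqF.
rewrite mulr_suml; apply: eq_big_nat => j /andP[_ lt_jn].
by rewrite big_nat_recr // gtn_eqF.
Qed.

Lemma prob_one_eq_odds i n : (forall k, (i <= k < n)%N -> 1 - p k.+1 != 0) ->
  prob_one i n = prob_none i n * \sum_(i <= k < n) p k.+1 / (1 - p k.+1).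
Proof.
elim: n => [|n IHn] q_neq0; first by rewrite /prob_one !big_geq // mulr0.
have [le_in | lt_ni] := leqP i n; last by rewrite /prob_one !big_geq // mulr0.
have q_n : 1 - p n.+1 != 0 by apply: q_neq0; rewrite le_in leqnn.
rewrite prob_one_recr // prob_none_recr // big_nat_recr //= IHn; last first.
  by move=> k /andP[le_ik lt_kn]; rewrite q_neq0 // le_ik ltnW.
by field.
Qed.

Lemma prob_one_le_none i n :
    (forall k, (i <= k < n)%N -> p k.+1 < 1) ->
    \sum_(i <= k < n) p k.+1 / (1 - p k.+1) <= 1 ->
  prob_one i n <= prob_none i n.
Proof.
move=> p_lt1 odds_le1; rewrite prob_one_eq_odds => [|k /p_lt1]; last first.
  by rewrite subr_eq0 => /lt_eqF; rewrite eq_sym => ->.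
by rewrite ler_piMr // prob_none_ge0.
Qed.

Lemma prob_one_le_succ n :
  prob_one 0 n <= prob_none 0 n -> prob_one 0 n <= prob_one 0 n.+1.
Proof.
move=> one_le_none; rewrite prob_one_recr // -{1}[prob_one 0 n]mulr1.
rewrite -{1}(subrK (p n.+1) 1) mulrDr lerD2l ler_wpM2r //.
by have /andP[] := p_prob n.+1.
Qed.

End TailEvents.

Lemma Pr_no_success_after (R : realFieldType) (p : nat -> R) n i :
  Pr p (fun w : outcome n => [forall k : 'I_n, (i < k)%N ==> ~~ w k]) =
  prob_none p i.+1 n.
Proof.
rewrite (Pr_prod p (fun k b => (i < k)%N ==> ~~ b)) /prob_none big_geq_mkord.
rewrite [RHS]big_mkcond; apply: eq_bigr => k _ /=.
case: ltnP => _ /=; first by rewrite big_mkcond big_bool /= add0r.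
by rewrite big_bool /= subrKC.
Qed.

Section StoppingTimes.

Context {n : nat} {tau : {ffun outcome n -> 'I_n}}.
Hypothesis tau_stop : is_stopping tau.

Lemma stoppingP (w w' : outcome n) :
  (forall j : 'I_n, (j <= tau w)%N -> w j = w' j) -> tau w' = tau w.
Proof.
move=> agree; have /forallP/(_ w)/forallP/(_ w')/implyP stop_w := tau_stop.
by apply/eqP/stop_w/forallP => j; apply/implyP => /agree ->.
Qed.

Lemma stopping_ge i (w w' : outcome n) :
  (forall k : 'I_n, (k < i)%N -> w k = w' k) -> (i <= tau w)%N = (i <= tau w')%N.
Proof.
suff ge_tau (u u' : outcome n) : (forall k : 'I_n, (k < i)%N -> u k = u' k) ->
    (i <= tau u)%N -> (i <= tau u')%N.
  by move=> agree; apply/idP/idP; apply: ge_tau => // k /agree.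
move=> agree; apply: contraTT; rewrite -!ltnNge => lt_u'_i.
rewrite (@stoppingP u' u) // => j le_j_u'.
by rewrite agree // (leq_ltn_trans le_j_u').
Qed.

Lemma stopping_eq (i : 'I_n) (w w' : outcome n) :
  (forall k : 'I_n, (k <= i)%N -> w k = w' k) -> (tau w == i) = (tau w' == i).
Proof.
have tau_eq u : (tau u == i) = (i <= tau u)%N && ~~ (i < tau u)%N.
  by rewrite -leqNgt andbC -eqn_leq.
move=> agree; rewrite !tau_eq (stopping_ge i w w') => [|k /ltnW/agree //].
by rewrite (stopping_ge i.+1 w w').
Qed.

End StoppingTimes.

(* One step of the telescoping bound: c, s and s' stand for the probabilities
   of stopping at time i+1 on a success, of tau >= i and of tau >= i+1. *)
Lemma stage_le (R : numDomainType) (c s s' a T W : R) :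
  c <= a * s -> c <= s - s' -> 0 <= W <= T ->
  c * T <= s * (a * T + (1 - a) * W) - s' * W.
Proof.
move=> c_le_as c_le_ds /andP[W_ge0 W_le_T]; rewrite -subr_ge0.
have -> : s * (a * T + (1 - a) * W) - s' * W - c * T =
          (a * s - c) * (T - W) + (s - s' - c) * W by ring.
by rewrite addr_ge0 ?mulr_ge0 ?subr_ge0.
Qed.

Section UpperBound.

Context {R : realFieldType} (p : nat -> R).
Context {n : nat} {tau : {ffun outcome n -> 'I_n}}.
Hypotheses (p_prob : forall j, 0 <= p j <= 1) (tau_stop : is_stopping tau).

Let reach j := Pr p (fun w => (j <= tau w)%N).
Let stop_on_success (i : 'I_n) := Pr p (fun w => (tau w == i) && w i).

Lemma win_prob_stop_decomp :
  win_prob p tau = \sum_(i < n) stop_on_success i * prob_none p i.+1 n.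
Proof.
rewrite /win_prob (partition_big (fun w => tau w) xpredT) //=.
apply: eq_bigr => i _.
have -> : \sum_(w | success tau w && (tau w == i)) weight p w =
    Pr p (fun w => ((tau w == i) && w i) && [forall k : 'I_n, (i < k)%N ==> ~~ w k]).
  apply: eq_bigl => w; rewrite /success.
  by case: (eqVneq (tau w) i) => [->|_]; rewrite ?andbT ?andbF.
rewrite (Pr_indep p (fun k : 'I_n => (k <= i)%N)) ?Pr_no_success_after // => w w' agree.
  by rewrite (stopping_eq tau_stop i w w' agree) agree.
apply: eq_forallb => k; case: ltnP => // lt_ik.
by rewrite agree // -ltnNge.
Qed.

Lemma stop_on_success_le_reach (i : 'I_n) : stop_on_success i <= p i.+1 * reach i.
Proof.
apply: (@le_trans _ _ (Pr p (fun w => (i <= tau w)%N && w i))).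
  by apply: le_Pr => // w /andP[/eqP -> ->]; rewrite leqnn.
rewrite (Pr_indep p (fun k : 'I_n => (k < i)%N) (fun w => i <= tau w)%N (fun w => w i)).
- by rewrite Pr_coord mulrC.
- by move=> w w'; apply: stopping_ge.
by move=> w w' agree; apply: agree; rewrite ltnn.
Qed.

Lemma stop_on_success_le_reach_diff (i : 'I_n) :
  stop_on_success i <= reach i - reach i.+1.
Proof.
have split_reach : reach i = Pr p (fun w => tau w == i) + reach i.+1.
  rewrite /reach (Pr_split p _ (fun w => tau w == i)).
  congr (_ + _); apply: eq_Pr => w.
    by case: eqP => [->|]; rewrite ?leqnn ?andbF.
  by rewrite ltn_neqAle andbC eq_sym.
by rewrite split_reach addrK; apply: le_Pr => // w /andP[].
Qed.

Lemma win_prob_le_prob_one :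
    (forall j, (j <= n)%N -> prob_one p j n <= prob_none p j n) ->
  win_prob p tau <= prob_one p 0 n.
Proof.
move=> one_le_none; pose f j := reach j * prob_one p j n.
have step (i : 'I_n) : stop_on_success i * prob_none p i.+1 n <= f i - f i.+1.
  rewrite /f prob_one_recl ?ltn_ord //; apply: stage_le.
  - exact: stop_on_success_le_reach.
  - exact: stop_on_success_le_reach_diff.
  - by rewrite prob_one_ge0 // one_le_none.
have reach0 : reach 0 = 1 by rewrite -(Pr_predT p (n := n)); apply: eq_Pr.
have reachn : reach n = 0.
  by rewrite /reach /Pr big_pred0 // => w; rewrite leqNgt ltn_ord.
rewrite win_prob_stop_decomp (le_trans (ler_sum _ (fun i _ => step i))) //.
rewrite -(big_mkord xpredT (fun i => f i - f i.+1)).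
rewrite (@telescope_sumr_eq _ 0 n (fun j => - f j)) => [|//|k _]; last first.
  by rewrite opprK addrC.
by rewrite /f reach0 reachn mul0r mul1r oppr0 sub0r opprK.
Qed.

End UpperBound.

Section FirstSuccess.

Context {n : nat}.

Definition first_success : {ffun outcome n.+1 -> 'I_n.+1} :=
  [ffun w : outcome n.+1 => [arg min_(j < ord_max | w j || (j == ord_max)) j]%N].

Lemma first_success_spec (w : outcome n.+1) :
  (w (first_success w) || (first_success w == ord_max)) /\
  (forall k : 'I_n.+1, (k < first_success w)%N -> ~~ w k).
Proof.
rewrite ffunE; case: arg_minnP => [|j Pj j_min]; first by rewrite eqxx orbT.
split=> // k lt_kj; apply: contraTN lt_kj => wk.
by rewrite -leqNgt j_min ?wk.
Qed.

Lemma first_successP (w : outcome n.+1) (j : 'I_n.+1) :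
  w j || (j == ord_max) -> (forall k : 'I_n.+1, (k < j)%N -> ~~ w k) ->
  first_success w = j.
Proof.
have [Pf f_min] := first_success_spec w; move=> Pj j_min; apply: ord_inj.
have lt_max (k : 'I_n.+1) m : (k < m)%N -> (m <= n)%N -> k != ord_max.
  by move=> lt_km le_mn; rewrite -(inj_eq val_inj) /= neq_ltn (leq_trans lt_km).
case: (ltngtP (first_success w) j) => // [lt_fj | lt_jf].
  by move: Pf; rewrite (negbTE (j_min _ lt_fj)) (negbTE (lt_max _ _ lt_fj (leq_ord _))).
by move: Pj; rewrite (negbTE (f_min _ lt_jf)) (negbTE (lt_max _ _ lt_jf (leq_ord _))).
Qed.

Lemma first_success_stopping : is_stopping first_success.
Proof.
apply/forallP => w; apply/forallP => w'; apply/implyP => /forallP agree.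
have [Pf f_min] := first_success_spec w.
have agree_w (k : 'I_n.+1) : (k <= first_success w)%N -> w' k = w k.
  by move=> le_k; have /implyP/(_ le_k)/eqP <- := agree k.
apply/eqP/first_successP; first by rewrite agree_w.
by move=> k lt_k; rewrite agree_w ?f_min // ltnW.
Qed.

Lemma first_success_win (w : outcome n.+1) (j : 'I_n.+1) :
  success first_success w && (first_success w == j) = (w == [ffun k => k == j]).
Proof.
have [Pf f_min] := first_success_spec w.
apply/andP/eqP => [[/andP[wf /forallP after] /eqP fj] | ->].
  apply/ffunP => k; rewrite ffunE -fj -(inj_eq val_inj) /=.
  case: (ltngtP k (first_success w)) => [lt_kf | lt_fk | /ord_inj ->].
  - exact/negbTE/f_min.
  - exact/negbTE/(implyP (after k)).
  - exact: wf.
have fj : first_success [ffun k => k == j] = j.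
  apply: first_successP => [|k lt_kj]; first by rewrite ffunE eqxx.
  by rewrite ffunE -(inj_eq val_inj) ltn_eqF.
rewrite /success fj ffunE eqxx; split=> //; apply/forallP => k; apply/implyP => lt_jk.
by rewrite ffunE -(inj_eq val_inj) gtn_eqF.
Qed.

End FirstSuccess.

Lemma win_prob_first_success (R : realFieldType) (p : nat -> R) n :
  win_prob p (@first_success n) = prob_one p 0 n.+1.
Proof.
rewrite /win_prob (partition_big (fun w => first_success w) xpredT) //=.
rewrite /prob_one big_mkord; apply: eq_bigr => j _.
rewrite (eq_bigl _ _ (first_success_win^~ j)) big_pred1_eq /weight big_mkord.
by apply: eq_bigr => k _; rewrite ffunE.
Qed.

Lemma win_prob_le_V (R : realFieldType) (p : nat -> R) n
    (tau : {ffun outcome n -> 'I_n}) :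
  is_stopping tau -> win_prob p tau <= V p n.
Proof. by move=> tau_stop; rewrite /V (bigD1 tau) //= le_max lexx. Qed.

Lemma V_le (R : realFieldType) (p : nat -> R) n (x : R) : 0 <= x ->
  (forall tau : {ffun outcome n -> 'I_n}, is_stopping tau -> win_prob p tau <= x) ->
  V p n <= x.
Proof.
move=> x_ge0 win_le; apply: (big_ind (fun y => y <= x)) => // y z y_le z_le.
by rewrite ge_max y_le z_le.
Qed.

Lemma ler_sum_subrange (R : numDomainType) (F : nat -> R) i j m :
  (forall k, 0 <= F k) -> (i <= j <= m)%N ->
  \sum_(i <= k < j) F k <= \sum_(0 <= k < m) F k.
Proof.
move=> F_ge0 /andP[le_ij le_jm].
rewrite (big_cat_nat (leq0n i) (leq_trans le_ij le_jm)) (big_cat_nat le_ij le_jm) /=.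
by rewrite addrCA lerDl addr_ge0 ?sumr_ge0.
Qed.

Theorem lemma3p1 (R : realFieldType) (p : nat -> R)
    (hp : forall j, 0 <= p j <= 1) (n : nat) (hn : (1 <= n)%N)
    (hN : exists m : nat, (n.+1 <= m)%N /\ R1_le1 p m) :
  V p n <= V p n.+1.
Proof.
have [m [lt_nm [p_lt1 odds_le1]]] := hN.
have odds_ge0 k : 0 <= p k.+1 / (1 - p k.+1).
  by have /andP[p_ge0 p_le1] := hp k.+1; rewrite divr_ge0 // subr_ge0.
have one_le_none j : (j <= n)%N -> prob_one p j n <= prob_none p j n.
  move=> le_jn; apply: prob_one_le_none => // [k /andP[_ lt_kn] |].
    by apply: p_lt1; rewrite (leq_trans lt_kn) // ltnW.
  apply: le_trans _ odds_le1; rewrite big_add1 /=.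
  by apply: ler_sum_subrange; rewrite // le_jn ltnW.
apply: (@le_trans _ _ (prob_one p 0 n)).
  apply: V_le => [|tau tau_stop]; first exact: prob_one_ge0.
  exact: win_prob_le_prob_one.
apply: le_trans (prob_one_le_succ p hp n (one_le_none 0 (leq0n n))) _.
by rewrite -win_prob_first_success win_prob_le_V // first_success_stopping.
Qed.
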